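(* For all $t\in\mathcal T_{\mathcal I}$ we have $W_{\rm lr}(t)\le W_{\rm mm}(t,t,t)$.
   Context: $\mathcal T_{\mathcal I}$ is a binary cluster tree for a finite index set $\mathcal I$ (each cluster $t$ has label $\hat t\subseteq\mathcal I$; a non-leaf cluster has exactly two sons $t_1,t_2$ whose labels disjointly partition $\hat t$), with a block tree $\mathcal T_{\mathcal I\times\mathcal I}$ whose non-leaf blocks $(t,s)$ have sons $\mathrm{sons}^+(t)\times\mathrm{sons}^+(s)$ ($\mathrm{sons}^+(t)=\mathrm{sons}(t)$ for non-leaves, $\{t\}$ for leaves). $W_{\rm mm}(t,s,r)$ is the number of operations of the recursive $\mathcal H^2$-matrix multiplication algorithm for $Z|_{\hat t\times\hat r}\gets Z|_{\hat t\times\hat r}+X|_{\hat t\times\hat s}Y|_{\hat s\times\hat r}$, which for non-leaf blocks recurses into all son triples so that $W_{\rm mm}(t,s,r)\ge\sum_{t'\in\mathrm{sons}^+(t),s'\in\mathrm{sons}^+(s),r'\in\mathrm{sons}^+(r)}W_{\rm mm}(t',s',r')$. $W_{\rm lfs}(t,s)$ and $W_{\rm rfs}(t,s)$ are the operation counts of the recursive block forward substitutions for $L|_{\hat t\times\hat t}X=Y|_{\hat t\times\hat s}$ and $XR|_{\hat s\times\hat s}=Y|_{\hat t\times\hat s}$, which satisfy $W_{\rm lfs}(t,s)\le W_{\rm mm}(t,t,s)$ and $W_{\rm rfs}(t,s)\le W_{\rm mm}(t,s,s)$. $W_{\rm lr}(t)$ is the number of operations of the recursive LR factorization $L|_{\hat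 t\times\hat t}R|_{\hat t\times\hat t}=A|_{\hat t\times\hat t}$: for a leaf $t$, dense Gaussian elimination is used, costing at most $W_{\rm mm}(t,t,t)$; otherwise, with $\mathrm{sons}(t)=\{t_1,t_2\}$, it factorizes $A|_{\hat t_1\times\hat t_1}$ recursively, solves $L|_{\hat t_1\times\hat t_1}R|_{\hat t_1\times\hat t_2}=A|_{\hat t_1\times\hat t_2}$ and $L|_{\hat t_2\times\hat t_1}R|_{\hat t_1\times\hat t_1}=A|_{\hat t_2\times\hat t_1}$ by forward substitution, computes $A|_{\hat t_2\times\hat t_2}-L|_{\hat t_2\times\hat t_1}R|_{\hat t_1\times\hat t_2}$ by the multiplication algorithm, and factorizes it recursively, so $W_{\rm lr}(t)=W_{\rm lr}(t_1)+W_{\rm lfs}(t_1,t_2)+W_{\rm rfs}(t_2,t_1)+W_{\rm mm}(t_2,t_1,t_2)+W_{\rm lr}(t_2)$. *)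

From mathcomp Require Import all_boot.
Set Implicit Arguments. Unset Strict Implicit. Unset Printing Implicit Defensive.

Inductive ctree (I : finType) : Type :=
| CLeaf : {set I} -> ctree I
| CNode : {set I} -> ctree I -> ctree I -> ctree I.

Definition label (I : finType) (t : ctree I) : {set I} :=
  match t with CLeaf l => l | CNode l _ _ => l end.

Definition is_leaf (I : finType) (t : ctree I) : bool :=
  if t is CLeaf _ then true else false.

Definition sonsp (I : finType) (t : ctree I) : seq (ctree I) :=
  match t with CLeaf _ => [:: t] | CNode _ t1 t2 => [:: t1; t2] end.

Fixpoint wf_ctree (I : finType) (t : ctree I) : Prop :=
  match t with
  | CLeaf _ => True
  | CNode l t1 t2 =>
      [/\ label t1 :&: label t2 = set0, label t1 :|: label t2 = l,
          wf_ctree t1 & wf_ctree t2]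
  end.

Definition cluster_tree (I : finType) (root : ctree I) : Prop :=
  wf_ctree root /\ label root = [set: I].

Inductive is_cluster (I : finType) (root : ctree I) : ctree I -> Prop :=
| is_cluster_root : is_cluster root root
| is_cluster_son1 l t1 t2 : is_cluster root (CNode l t1 t2) -> is_cluster root t1
| is_cluster_son2 l t1 t2 : is_cluster root (CNode l t1 t2) -> is_cluster root t2.

From mathcomp Require Import all_boot.
From mathcomp Require Import zify.

(* For a non-leaf cluster t with sons t1, t2,
   each of the five summands of W_lr(t) is bounded by a different one of the
   eight son-triple costs W_mm(t_i, t_j, t_k) (the two recursive factorizations
   by induction, the two forward substitutions and the update directly), and
   W_mm(t,t,t) dominates the sum of all eight because the diagonal block (t,t)
   is subdivided. *)

Lemma is_cluster_sons {I : finType} {root : ctree I} {l t1 t2} :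
  is_cluster root (CNode l t1 t2) -> is_cluster root t1 /\ is_cluster root t2.
Proof. by move=> Ht; split; [exact: is_cluster_son1 Ht | exact: is_cluster_son2 Ht]. Qed.

Lemma sum_sonsp3_node (I : finType) (W : ctree I -> ctree I -> ctree I -> nat)
    l t1 t2 (t := CNode l t1 t2) :
  \sum_(t' <- sonsp t) \sum_(s' <- sonsp t) \sum_(r' <- sonsp t) W t' s' r' =
    W t1 t1 t1 + W t1 t1 t2 + W t1 t2 t1 + W t1 t2 t2 +
    W t2 t1 t1 + W t2 t1 t2 + W t2 t2 t1 + W t2 t2 t2.
Proof. by rewrite /= !big_cons !big_nil /= !addn0 !addnA. Qed.

Theorem mainTheorem4 (I : finType) (root : ctree I)
  (bnonleaf : ctree I -> ctree I -> bool)
  (Wmm : ctree I -> ctree I -> ctree I -> nat)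
  (Wlfs Wrfs : ctree I -> ctree I -> nat)
  (Wlr : ctree I -> nat) :
  cluster_tree root ->
  (forall t, is_cluster root t -> ~~ is_leaf t -> bnonleaf t t) ->
  (forall t s r, is_cluster root t -> is_cluster root s -> is_cluster root r ->
     bnonleaf t s -> bnonleaf s r -> bnonleaf t r ->
     \sum_(t' <- sonsp t) \sum_(s' <- sonsp s) \sum_(r' <- sonsp r) Wmm t' s' r'
       <= Wmm t s r) ->
  (forall t s, is_cluster root t -> is_cluster root s -> Wlfs t s <= Wmm t t s) ->
  (forall t s, is_cluster root t -> is_cluster root s -> Wrfs t s <= Wmm t s s) ->
  (forall t, is_cluster root t -> is_leaf t -> Wlr t <= Wmm t t t) ->
  (forall l t1 t2, is_cluster root (CNode l t1 t2) ->
     Wlr (CNode l t1 t2) =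
       Wlr t1 + Wlfs t1 t2 + Wrfs t2 t1 + Wmm t2 t1 t2 + Wlr t2) ->
  forall t, is_cluster root t -> Wlr t <= Wmm t t t.
Proof.
move=> _ diag_nonleaf mm_sons lfs_mm rfs_mm lr_leaf lr_node.
elim=> [l|l t1 IH1 t2 IH2] Ht; first exact: lr_leaf.
have [Ht1 Ht2] := is_cluster_sons Ht.
have Htt := diag_nonleaf _ Ht isT.
have := mm_sons _ _ _ Ht Ht Ht Htt Htt Htt.
rewrite sum_sonsp3_node lr_node //.
have := IH1 Ht1; have := IH2 Ht2.
have := lfs_mm _ _ Ht1 Ht2; have := rfs_mm _ _ Ht2 Ht1.
lia.
Qed.
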